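(* Let $H \in \mathbb{R}^{r \times n}_+$ be an entrywise nonnegative matrix satisfying the NC-SSC, i.e., $e - e_i \in \operatorname{cone}(H)$ for all $i \in \{1,\dots,r\}$. Define $$p^* = \max_{x \in \mathbb{R}^r} \|x\|_2 \ \text{ subject to } \ e^\top x = 1,\ H^\top x \ge 0,$$ and $$q^* = \max_{x \in \mathbb{R}^r} \|x\|_2 \ \text{ subject to } \ e^\top x = 1,\ H^\top x \ge 0,\ -1 \le x_i \le 1 \text{ for all } i.$$ Then $p^* = 1$ if and only if $q^* = 1$.
   Context: $e \in \mathbb{R}^r$ denotes the all-ones vector, $e_i$ the $i$-th standard unit vector of $\mathbb{R}^r$, $\|\cdot\|_2$ the Euclidean norm, and inequalities between vectors are entrywise. For $H \in \mathbb{R}^{r\times n}$, $\operatorname{cone}(H) = \{ Hy : y \in \mathbb{R}^n, y \ge 0\}$. The NC-SSC for $H$ means $\operatorname{cone}(ee^\top - I) \subseteq \operatorname{cone}(H)$, equivalently $e - e_i \in \operatorname{cone}(H)$ for all $i$. *)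

From mathcomp Require Import all_boot all_order all_algebra.
From mathcomp Require Import reals.
Set Implicit Arguments. Unset Strict Implicit. Unset Printing Implicit Defensive.
Import Order.TTheory GRing.Theory Num.Theory.
Local Open Scope ring_scope.

Section Defs.
Variable R : realType.

Definition ones (r : nat) : 'cV[R]_r := const_mx 1.
Definition unitv (r : nat) (i : 'I_r) : 'cV[R]_r := \col_k (if k == i then 1 else 0).

Definition nonneg_mx (m n : nat) (A : 'M[R]_(m, n)) : Prop := forall i j, 0 <= A i j.

Definition in_cone (r n : nat) (H : 'M[R]_(r, n)) (v : 'cV[R]_r) : Prop :=
  exists y : 'cV[R]_n, nonneg_mx y /\ H *m y = v.

Definition NC_SSC (r n : nat) (H : 'M[R]_(r, n)) : Prop :=
  forall i : 'I_r, in_cone H (ones r - unitv i).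

Definition enorm (r : nat) (x : 'cV[R]_r) : R := Num.sqrt (\sum_i x i 0 ^+ 2).

Definition feas_p (r n : nat) (H : 'M[R]_(r, n)) (x : 'cV[R]_r) : Prop :=
  (ones r)^T *m x = 1 /\ nonneg_mx (H^T *m x).

Definition feas_q (r n : nat) (H : 'M[R]_(r, n)) (x : 'cV[R]_r) : Prop :=
  feas_p H x /\ (forall i, -1 <= x i 0 <= 1).

(* "max_{x in S} ||x||_2 = v": the value v is attained on S and is an upper bound *)
Definition max_norm_is (r : nat) (S : 'cV[R]_r -> Prop) (v : R) : Prop :=
  (exists2 x, S x & enorm x = v) /\ (forall x, S x -> enorm x <= v).

End Defs.

From mathcomp Require Import all_boot all_order all_algebra.
From mathcomp Require Import reals ring lra.
Import Order.TTheory GRing.Theory Num.Theory.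
Set Implicit Arguments. Unset Strict Implicit. Unset Printing Implicit Defensive.
Local Open Scope ring_scope.

(* The NC-SSC gives (e - e_i)^T x >= 0, i.e. x_i <= 1, for every feasible x;
   so q* only adds the lower bounds x_i >= -1, and the forward direction is
   immediate since a vector of norm 1 lies in the box.  Conversely, if q* = 1 and
   some feasible x had x_j < -1, walk from a q-feasible point towards x until
   a coordinate first reaches -1.  The point z reached is q-feasible, so
   ||z|| <= 1 together with z_k = -1 forces z = -e_k, contradicting e^T z = 1. *)

Section Vectors.
Variables (R : realType) (r : nat).
Implicit Types x : 'cV[R]_r.

Lemma ones_tr_mul x : ((ones R r)^T *m x) 0 0 = \sum_i x i 0.
Proof. by rewrite mxE; apply: eq_bigr => i _; rewrite !mxE mul1r. Qed.

Lemma unitv_tr_mul i x : ((unitv R i)^T *m x) 0 0 = x i 0.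
Proof.
rewrite mxE (bigD1 i) //= !mxE eqxx mul1r big1 ?addr0 // => k /negbTE ki.
by rewrite !mxE ki mul0r.
Qed.

Lemma sqr_coord_le_sum x i : x i 0 ^+ 2 <= \sum_j x j 0 ^+ 2.
Proof. by rewrite (bigD1 i) //= lerDl sumr_ge0 // => j _; rewrite sqr_ge0. Qed.

Lemma sqr_enorm x : enorm x ^+ 2 = \sum_i x i 0 ^+ 2.
Proof. by rewrite sqr_sqrtr // sumr_ge0 // => i _; rewrite sqr_ge0. Qed.

Lemma enorm_le1_sqr x : enorm x <= 1 -> \sum_i x i 0 ^+ 2 <= 1.
Proof. by move=> le1; rewrite -sqr_enorm exprn_ile1 ?sqrtr_ge0. Qed.

Lemma enorm_le1_coord x i : enorm x <= 1 -> -1 <= x i 0 <= 1.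
Proof.
move=> /enorm_le1_sqr/(le_trans (sqr_coord_le_sum x i)) sq_le1.
by apply/andP; split; nra.
Qed.

Lemma enorm_le1_sum_coord x k :
  enorm x <= 1 -> x k 0 ^+ 2 = 1 -> \sum_i x i 0 = x k 0.
Proof.
move=> /enorm_le1_sqr; rewrite (bigD1 k) //= => + xk1; rewrite xk1 gerDl.
move=> rest_le0; rewrite (bigD1 k) //= big1 ?addr0 // => i ik.
have rest0 : \sum_(j | j != k) x j 0 ^+ 2 = 0.
  by apply/eqP; rewrite eq_le rest_le0 sumr_ge0 // => j _; rewrite sqr_ge0.
by apply/eqP; rewrite -sqrf_eq0; apply/eqP/(psumr_eq0P _ rest0) => // j _; rewrite sqr_ge0.
Qed.

(* The step size t is the smallest of the exit times (x0_i + 1) / (x0_i - x_i)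
   over the coordinates with x_i < -1. *)
Lemma segment_hits_lower_face x0 x j :
  (forall i, -1 <= x0 i 0) -> x j 0 < -1 ->
  exists t k, [/\ 0 <= t <= 1, forall i, -1 <= ((1 - t) *: x0 + t *: x) i 0
                 & ((1 - t) *: x0 + t *: x) k 0 = -1].
Proof.
move=> x0_ge xj_lt.
pose g i := (x0 i 0 + 1) / (x0 i 0 - x i 0).
have [k xk_lt g_min] := @arg_minP _ _ _ j (fun i => x i 0 < -1) g xj_lt.
have gap_gt0 i : x i 0 < -1 -> 0 < x0 i 0 - x i 0 by have := x0_ge i; lra.
have gk_ge0 : 0 <= g k by rewrite divr_ge0 ?(ltW (gap_gt0 k _)) //; have := x0_ge k; lra.
have gj_lt1 : g j < 1 by rewrite ltr_pdivrMr ?gap_gt0 //; lra.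
have gk_le1 : g k <= 1 by have := g_min j xj_lt; lra.
exists (g k), k; split; first by rewrite gk_ge0 gk_le1.
  move=> i; rewrite !mxE; have := x0_ge i.
  case: (ltrP (x i 0) (-1)) => [xi_lt | xi_ge]; last by nra.
  by have := g_min i xi_lt; rewrite /= ler_pdivlMr ?gap_gt0 //; nra.
by rewrite !mxE /g; field; have := gap_gt0 k xk_lt; lra.
Qed.

End Vectors.

Section Feasibility.
Variables (R : realType) (r n : nat) (H : 'M[R]_(r, n)).
Implicit Types x : 'cV[R]_r.

Lemma feas_p_sum x : feas_p H x -> \sum_i x i 0 = 1.
Proof. by case=> /(congr1 (fun M : 'M_1 => M 0 0)); rewrite ones_tr_mul mxE. Qed.

Lemma in_cone_tr_mul_ge0 v x :
  in_cone H v -> nonneg_mx (H^T *m x) -> 0 <= (v^T *m x) 0 0.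
Proof.
case=> y [y_ge0 <-] Hx_ge0; rewrite trmx_mul -mulmxA mxE.
by apply: sumr_ge0 => k _; rewrite mxE mulr_ge0.
Qed.

Lemma feas_p_le1 x i : NC_SSC H -> feas_p H x -> x i 0 <= 1.
Proof.
move=> NC fx; have := in_cone_tr_mul_ge0 (NC i) fx.2.
by rewrite linearB /= mulmxBl mxE ones_tr_mul mxE unitv_tr_mul feas_p_sum // subr_ge0.
Qed.

Lemma feas_p_convex x y t : 0 <= t <= 1 ->
  feas_p H x -> feas_p H y -> feas_p H ((1 - t) *: x + t *: y).
Proof.
move=> /andP[t_ge0 t_le1] [ex Hx_ge0] [ey Hy_ge0]; split.
  by rewrite mulmxDr -!scalemxAr ex ey -scalerDl subrK scale1r.
move=> i j; have := Hx_ge0 i j; have := Hy_ge0 i j.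
by rewrite mulmxDr -!scalemxAr !mxE => Hy Hx; rewrite addr_ge0 // mulr_ge0 ?subr_ge0.
Qed.

Lemma feas_p_geN1 x0 x i : NC_SSC H -> feas_q H x0 ->
  (forall z, feas_q H z -> enorm z <= 1) -> feas_p H x -> -1 <= x i 0.
Proof.
move=> NC [fx0 x0_box] q_le1 fx; rewrite leNgt; apply/negP => xi_lt.
have x0_ge i' : -1 <= x0 i' 0 by case/andP: (x0_box i').
have [t [k [t01 z_ge zk]]] := segment_hits_lower_face x0_ge xi_lt.
have fz := feas_p_convex t01 fx0 fx.
have : enorm ((1 - t) *: x0 + t *: x) <= 1.
  by apply: q_le1; split => // l; rewrite z_ge feas_p_le1.
move/enorm_le1_sum_coord => /(_ k); rewrite zk feas_p_sum // sqrrN expr1n.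
by move=> /(_ erefl) one_eqN1; lra.
Qed.

End Feasibility.

Theorem lemma3 (R : realType) (r n : nat) (H : 'M[R]_(r, n)) :
  nonneg_mx H -> NC_SSC H ->
  (max_norm_is (feas_p H) 1 <-> max_norm_is (feas_q H) 1).
Proof.
move=> _ NC; split.
  case=> [[x fx x_norm] p_le1]; split; last by move=> y [/p_le1].
  by exists x => //; split => // i; rewrite enorm_le1_coord ?x_norm.
case=> [[x0 fx0 x0_norm] q_le1]; split; first by exists x0 => //; case: fx0.
move=> x fx; apply: (q_le1); split => // i.
by rewrite (feas_p_geN1 i NC fx0 q_le1 fx) (feas_p_le1 i NC fx).
Qed.
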